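(* Let $j$ be the closed topology on the topos of graphs $\mathcal{G}$, and let $S$ be a subgraph of a graph $G$. Then the $j$-closure $\bar S$ of $S$ in $G$ is obtained by adding to $S$ all the nodes of $G$ (i.e., $\bar S$ is the spanning subgraph generated by $S$). Consequently a subgraph of $G$ is $j$-dense if and only if it contains all the arcs of $G$; in particular there is a minimum $j$-dense subgraph of $G$, namely the one consisting of all arcs of $G$ (with their endpoints).
   Context: The topos of graphs $\mathcal{G}=\mathbf{Sets}^{\Gamma^{op}}$, where $\Gamma$ has objects $N, A$ and two arrows $s,t:N\to A$; a graph $G$ has node set $G(N)$, arc set $G(A)$ and source/target maps, and morphisms preserve source and target. The subobject classifier $\Omega$ has nodes $0_N, N$ and arcs $0_A$ (loop on $0_N$), $s$ (from $N$ to $0_N$), $t$ (from $0_N$ to $N$), $\binom{s}{t}$ and $A$ (loops on $N$). For a subgraph $S\hookrightarrow G$, its characteristic map $\chi:G\to\Omega$ sends nodes not in $S$ to $0_N$, nodes in $S$ to $N$, arcs in $S$ to $A$, and an arc not in $S$ to $0_A$, $s$, $t$ or $\binom{s}{t}$ according as neither endpoint, only its source, only its target, or both endpoints lie in $S$. The closed topology is the morphism $j:\Omega\to\Omega$ with $j(0_N)=j(N)=N$, $j(0_A)=j(s)=j(t)=j(\binom{s}{t})=\binom{s}{t}$, $j(A)=A$ (equivalently $j=(-)\vee\binom{s}{t}$). For a topology $j$, the $j$-closure of $S\hookrightarrow G$ is the subgraph classified by $j\circ\chi$, and $S$ is $j$-dense if its closure is all of $G$. A spanning subgraph of $G$ is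 a subgraph containing all nodes of $G$. *)

From mathcomp Require Import all_boot.
From mathcomp Require Import boolp.

Set Implicit Arguments.
Unset Strict Implicit.

(* A graph = presheaf on Gamma: gnode set, garc set, source and target maps. *)
Record graph := Graph {
  gnode : Type;
  garc : Type;
  src : garc -> gnode;
  tgt : garc -> gnode }.

Record subgraph (G : graph) := Subgraph {
  sN : gnode G -> Prop;
  sA : garc G -> Prop;
  sA_src : forall a, sA a -> sN (src a);
  sA_tgt : forall a, sA a -> sN (tgt a) }.

(* The subobject classifier Omega of the topos of graphs. *)
Inductive Onode := O0N | ON.
Inductive Oarc := O0A | Os | Ot | Ost (* binom(s,t) *) | OA.

Definition Osrc (e : Oarc) : Onode :=
  match e with O0A => O0N | Os => ON | Ot => O0N | Ost => ON | OA => ON end.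
Definition Otgt (e : Oarc) : Onode :=
  match e with O0A => O0N | Os => O0N | Ot => ON | Ost => ON | OA => ON end.

Definition Omega : graph := @Graph Onode Oarc Osrc Otgt.

Definition chiN (G : graph) (S : subgraph G) (x : gnode G) : Onode :=
  if `[< sN S x >] then ON else O0N.

Definition chiA (G : graph) (S : subgraph G) (a : garc G) : Oarc :=
  if `[< sA S a >] then OA
  else match `[< sN S (src a) >], `[< sN S (tgt a) >] with
       | false, false => O0A
       | true, false => Os
       | false, true => Ot
       | true, true => Ost
       end.

(* The closed topology j = (-) \/ binom(s,t). *)
Definition jN (v : Onode) : Onode := ON.
Definition jA (e : Oarc) : Oarc :=
  match e with OA => OA | _ => Ost end.

(* The subgraph classified by a map phi = (phiN, phiA) : G -> Omega is the
   pullback of true : 1 -> Omega (true picks the gnode N and the garc A). *)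
Definition classifiedN (G : graph) (phiN : gnode G -> Onode) (x : gnode G) : Prop :=
  phiN x = ON.
Definition classifiedA (G : graph) (phiA : garc G -> Oarc) (a : garc G) : Prop :=
  phiA a = OA.

Definition closureN (G : graph) (S : subgraph G) : gnode G -> Prop :=
  classifiedN (fun x => jN (chiN S x)).
Definition closureA (G : graph) (S : subgraph G) : garc G -> Prop :=
  classifiedA (fun a => jA (chiA S a)).

Definition j_dense (G : graph) (S : subgraph G) : Prop :=
  (forall x, closureN S x) /\ (forall a, closureA S a).

Definition subgraph_le (G : graph) (S T : subgraph G) : Prop :=
  (forall x, sN S x -> sN T x) /\ (forall a, sA S a -> sA T a).

Definition arcs_subgraph (G : graph) : subgraph G :=
  @Subgraph G (fun x => exists a, src a = x \/ tgt a = x) (fun _ => True)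
    (fun a _ => ex_intro _ a (or_introl erefl))
    (fun a _ => ex_intro _ a (or_intror erefl)).

From mathcomp Require Import all_boot.
From mathcomp Require Import boolp.

(* The closed topology sends every node to N and fixes only the arc A, so the
   closure of S has all nodes and keeps exactly the arcs that chi_S sends to A,
   i.e. the arcs of S. Density is therefore containment of every arc, and the
   subgraph spanned by the arcs of G is the least such subgraph. *)

Lemma jA_eq_OA (e : Oarc) : jA e = OA <-> e = OA.
Proof. by case: e. Qed.

Lemma chiA_eq_OA (G : graph) (S : subgraph G) (a : garc G) :
  chiA S a = OA <-> sA S a.
Proof.
rewrite /chiA; case: (asboolP (sA S a)) => // notSa.
by split=> //; case: `[< sN S (src a) >]; case: `[< sN S (tgt a) >].
Qed.

Lemma closureN_all (G : graph) (S : subgraph G) (x : gnode G) : closureN S x.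
Proof. by []. Qed.

Lemma closureAE (G : graph) (S : subgraph G) (a : garc G) :
  closureA S a <-> sA S a.
Proof. by rewrite /closureA /classifiedA jA_eq_OA chiA_eq_OA. Qed.

Lemma j_denseE (G : graph) (S : subgraph G) :
  j_dense S <-> (forall a : garc G, sA S a).
Proof.
split=> [[_ closedA] a | allA]; first exact/closureAE.
by split=> [x | a]; [exact: closureN_all | exact/closureAE].
Qed.

Lemma arcs_subgraph_j_dense (G : graph) : j_dense (arcs_subgraph G).
Proof. exact/j_denseE. Qed.

Lemma arcs_subgraph_le (G : graph) (T : subgraph G) :
  (forall a : garc G, sA T a) -> subgraph_le (arcs_subgraph G) T.
Proof.
move=> allA; split=> [x [a [<- | <-]] | a _]; last exact: allA.
- exact: sA_src (allA a).
- exact: sA_tgt (allA a).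
Qed.

Theorem theorem2 (G : graph) (S : subgraph G) :
  (* the j-closure of S is the spanning subgraph generated by S *)
  ((forall x : gnode G, closureN S x) /\ (forall a : garc G, closureA S a <-> sA S a))
  (* S is j-dense iff it contains all arcs of G *)
  /\ (j_dense S <-> (forall a : garc G, sA S a))
  (* the subgraph of all arcs (with endpoints) is the minimum j-dense subgraph *)
  /\ (j_dense (arcs_subgraph G)
      /\ forall T : subgraph G, j_dense T -> subgraph_le (arcs_subgraph G) T).
Proof.
split; first by split; [exact: closureN_all | exact: closureAE].
split; first exact: j_denseE.
split; first exact: arcs_subgraph_j_dense.
by move=> T /j_denseE; apply: arcs_subgraph_le.
Qed.
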